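(* Let $H=(W,F)$ be a graph, $xy$ a flat edge of $H$, and $B=(X,Y;E_{XY})$ a cobipartite graph disjoint from $H$ with $E_{XY}\neq\varnothing$. Let $G$ be the graph obtained by the augmentation of the edge $xy$ in $H$ using $B$, and let $D=(V,A)$ be a clique-acyclic orientation of $G$. Let $s_X,s_Y$ be the sinks of $D[X]$ and $D[Y]$ respectively, labelled so that $(s_X,s_Y)\notin A$. Let $U=Y\setminus N_G(s_X)$, let $S_U=\varnothing$ if $U=\varnothing$ and $S_U=\{s_U\}$ where $s_U$ is the sink of $D[U]$ otherwise, and let $Z=(V\setminus(X\cup Y))\cup\{s_X,s_Y\}\cup S_U$. Then every kernel of $D[Z]$ is a kernel of $D$.
   Context: An edge of an undirected graph is flat if it is contained in no triangle. A cobipartite graph $B=(X,Y;E_{XY})$ has vertex set partitioned into two cliques $X$ and $Y$, with $E_{XY}$ the set of edges between $X$ and $Y$. The augmentation of a flat edge $xy$ in $H$ using $B$ builds a graph from $H$ and $B$ by removing $x$, $y$ (and the edge $xy$) from $H$, and adding all edges between $X$ and $N_H(x)\setminus\{y\}$ and all edges between $Y$ and $N_H(y)\setminus\{x\}$. An orientation orients each edge in exactly one direction; it is clique-acyclic if every clique has a sink, i.e. a vertex receiving an arc from every other vertex of the clique. For a digraph $D=(V,A)$, a set $S$ is stable if no two vertices of $S$ are adjacent, absorbing if every $u\in V\setminus S$ has some $v\in S$ with $(u,v)\in A$; a kernel is a stable absorbing set. *)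

From mathcomp Require Import all_boot.
Set Implicit Arguments. Unset Strict Implicit. Unset Printing Implicit Defensive.

Definition simple_graph (T : finType) (e : rel T) : Prop :=
  (forall u v, e u v = e v u) /\ (forall u, ~~ e u u).

Definition is_clique (T : finType) (e : rel T) (K : {set T}) : Prop :=
  forall u v, u \in K -> v \in K -> u != v -> e u v.

Definition flat_edge (W : finType) (e : rel W) (x y : W) : Prop :=
  e x y /\ forall z, ~~ (e x z && e y z).

Notation aug_vert W VB x y := ({w : W | (w != x) && (w != y)} + VB)%type.

(* Adjacency of the augmentation of the flat edge xy of H=(W,e) using the
   cobipartite graph B = (X, ~:X ; eB). *)
Definition aug_adj (W VB : finType) (e : rel W) (x y : W) (X : {set VB})
  (eB : rel VB) : rel (aug_vert W VB x y) :=
  fun u v =>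
    match u, v with
    | inl a, inl b => e (val a) (val b)
    | inr a, inr b => eB a b
    | inl a, inr b => if b \in X then e (val a) x else e (val a) y
    | inr a, inl b => if a \in X then e x (val b) else e y (val b)
    end.

Definition orientation (T : finType) (g : rel T) (A : rel T) : Prop :=
  (forall u v, g u v = (A u v || A v u)) /\ (forall u v, ~~ (A u v && A v u)).

Definition is_sink (T : finType) (A : rel T) (K : {set T}) (s : T) : Prop :=
  s \in K /\ forall u, u \in K -> u != s -> A u s.

Definition clique_acyclic (T : finType) (g : rel T) (A : rel T) : Prop :=
  forall K : {set T}, K != set0 -> is_clique g K -> exists s, is_sink A K s.

Definition kernel_of_induced (T : finType) (A : rel T) (S K : {set T}) : Prop :=
  K \subset S /\
  (forall u v, u \in K -> v \in K -> ~~ A u v) /\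
  (forall u, u \in S -> u \notin K -> exists2 v, v \in K & A u v).

Definition kernel (T : finType) (A : rel T) (K : {set T}) : Prop :=
  kernel_of_induced A [set: T] K.

Arguments aug_adj {W VB} e x y X eB.

(* Every arc of a clique-acyclic orientation that closes a path a -> b -> c on
   an edge ac points from a to c: the triangle {a, b, c} has a sink, which can
   only be c.  Hence a vertex u outside Z with an arc u -> s into Z is absorbed
   by a kernel K of D[Z] as soon as u is adjacent to every out-neighbour of s
   in K.  A vertex of X is sent into s_X, whose out-neighbours in Z all lie in
   V(H) and so are neighbours of every vertex of X.  A vertex of Y adjacent to
   s_X is sent into s_Y, all of whose possible out-neighbours in Z are its
   neighbours; a vertex of Y not adjacent to s_X lies in U and is sent into
   s_U, whose out-neighbours in Z avoid s_X. *)

From mathcomp Require Import all_boot.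

Set Implicit Arguments.
Unset Strict Implicit.
Unset Printing Implicit Defensive.

Section CliqueAcyclicOrientation.

Variables (T : finType) (g A : rel T).
Hypothesis orA : orientation g A.

Lemma orientation_adj u v : A u v -> g u v.
Proof. by case: orA => gE _ Auv; rewrite gE Auv. Qed.

Lemma orientation_sym u v : g u v = g v u.
Proof. by case: orA => gE _; rewrite !gE orbC. Qed.

Lemma orientation_asym u v : A u v -> ~~ A v u.
Proof. by case: orA => _ asym Auv; move: (asym u v); rewrite Auv. Qed.

Lemma orientation_neq u v : A u v -> u != v.
Proof.
by move=> Auv; apply/eqP=> Euv; subst v; move: (orientation_asym Auv); rewrite Auv.
Qed.

Hypothesis acyclicA : clique_acyclic g A.

Lemma clique_acyclic_trans a b c :
  A a b -> A b c -> g a c -> a != c -> A a c.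
Proof.
move=> Aab Abc gac nac.
have gab := orientation_adj Aab; have gbc := orientation_adj Abc.
have [s [+ sinks]] : exists s, is_sink A [set a; b; c] s.
  apply: acyclicA; first by apply/set0Pn; exists a; rewrite !inE eqxx.
  move=> u v; rewrite !inE -!orbA.
  by move=> /or3P[]/eqP-> /or3P[]/eqP->; rewrite ?eqxx // 1?orientation_sym.
rewrite !inE -!orbA => /or3P[]/eqP Es; subst s.
- have Aba : A b a by apply: sinks; rewrite ?inE ?eqxx ?orbT // eq_sym orientation_neq.
  by move: (orientation_asym Aab); rewrite Aba.
- have Acb : A c b by apply: sinks; rewrite ?inE ?eqxx ?orbT // eq_sym orientation_neq.
  by move: (orientation_asym Abc); rewrite Acb.
- by apply: sinks; rewrite ?inE ?eqxx.
Qed.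

Lemma kernel_absorb_through (S K : {set T}) u s :
  kernel_of_induced A S K -> u \notin K -> s \in S -> A u s ->
  (forall v, v \in K -> A s v -> g u v) -> exists2 v, v \in K & A u v.
Proof.
move=> [_ [_ absK]] uK sS Aus adj_u.
have [sK | sK] := boolP (s \in K); first by exists s.
have [v vK Asv] := absK s sS sK; exists v => //.
apply: clique_acyclic_trans Aus Asv (adj_u v vK Asv) _.
by apply: contraNneq uK => ->.
Qed.

End CliqueAcyclicOrientation.

Section Augmentation.

Variables (W VB : finType) (e : rel W) (x y : W) (X : {set VB}) (eB : rel VB).
Local Notation g := (aug_adj e x y X eB).

Lemma aug_adj_same_side a b w :
  (a \in X) = (b \in X) -> g (inr a) (inl w) = g (inr b) (inl w).
Proof. by move=> /= ->. Qed.

Variables (A : rel (aug_vert W VB x y)) (sX sY : VB).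

Definition aug_U : {set aug_vert W VB x y} :=
  [set inr u | u in ~: X & ~~ g (inr sX) (inr u)].

Variables (SU K : {set aug_vert W VB x y}).

Definition aug_Z : {set aug_vert W VB x y} :=
  [set v | if v is inl _ then true else false] :|: [set inr sX; inr sY] :|: SU.

Hypotheses (cliqueY : is_clique eB (~: X)) (orA : orientation g A)
  (acyclicA : clique_acyclic g A)
  (sinkX : is_sink A [set inr u | u in X] (inr sX))
  (sinkY : is_sink A [set inr u | u in ~: X] (inr sY))
  (nAXY : ~~ A (inr sX) (inr sY))
  (SU_spec : (aug_U = set0 /\ SU = set0) \/
             (exists sU, is_sink A aug_U sU /\ SU = [set sU]))
  (kerK : kernel_of_induced A aug_Z K).

Lemma sX_in_X : sX \in X.
Proof. by case: sinkX => /imsetP[c cX [->]]. Qed.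

Lemma sY_notin_X : sY \notin X.
Proof. by case: sinkY => /imsetP[c + [->]]; rewrite inE. Qed.

Lemma aug_Z_sX : inr sX \in aug_Z.
Proof. by rewrite !inE eqxx orbT. Qed.

Lemma aug_Z_sY : inr sY \in aug_Z.
Proof. by rewrite !inE eqxx !orbT. Qed.

Lemma aug_SU_sub_U : SU \subset aug_U.
Proof.
case: SU_spec => [[_ ->] | [sU [[sUU _] ->]]]; first exact: sub0set.
by rewrite sub1set.
Qed.

Lemma aug_U_inr c : inr c \in aug_U -> (c \notin X) && ~~ g (inr sX) (inr c).
Proof. by case/imsetP=> c'; rewrite !inE => cU [->]. Qed.

Lemma aug_Z_X_sX c : inr c \in aug_Z -> c \in X -> c = sX.
Proof.
rewrite !inE /= -orbA => /or3P[/eqP[] // | /eqP[->] | cSU] cX.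
  by move: sY_notin_X; rewrite cX.
by move: (subsetP aug_SU_sub_U _ cSU) => /aug_U_inr; rewrite cX.
Qed.

Lemma aug_sX_out_Z c : A (inr sX) (inr c) -> inr c \notin aug_Z.
Proof.
move=> Ac; rewrite !inE /= -orbA; apply/or3P=> -[/eqP[Ec] | /eqP[Ec] | cSU].
- by move: (orientation_neq orA Ac); rewrite Ec eqxx.
- by rewrite Ec (negbTE nAXY) in Ac.
- move: (subsetP aug_SU_sub_U _ cSU) => /aug_U_inr /andP[_].
  by rewrite (orientation_adj orA Ac).
Qed.

(* By [aug_Z_X_sX], v lies either in V(H) or in the clique Y. *)
Lemma aug_adj_Y b c v :
  b \notin X -> c \notin X -> v \in aug_Z -> v != inr sX -> inr b != v ->
  g (inr c) v -> g (inr b) v.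
Proof.
move=> bX cX vZ vsX bv; case: v vZ vsX bv => [w | d] vZ vsX bv.
  have sideE : (b \in X) = (c \in X) by rewrite (negbTE bX) (negbTE cX).
  by rewrite (aug_adj_same_side w sideE).
have dX : d \notin X by apply: contra vsX => /(aug_Z_X_sX vZ) ->.
by move=> _; apply: cliqueY; rewrite ?inE //; apply: contra bv => /eqP ->.
Qed.

Lemma aug_absorb_X b :
  b \in X -> inr b \notin aug_Z -> inr b \notin K ->
  exists2 v, v \in K & A (inr b) v.
Proof.
move=> bX bZ bK; case: sinkX => _ sinkXs.
have AbsX : A (inr b) (inr sX).
  apply: sinkXs; first exact: imset_f.
  by apply: contraNneq bZ => ->; exact: aug_Z_sX.
apply: (kernel_absorb_through orA acyclicA kerK bK aug_Z_sX AbsX) => v vK AsXv.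
case: v vK AsXv => [w | c] vK AsXv.
  have sideE : (b \in X) = (sX \in X) by rewrite bX sX_in_X.
  by rewrite (aug_adj_same_side w sideE) (orientation_adj orA AsXv).
by move: (aug_sX_out_Z AsXv); rewrite (subsetP kerK.1 _ vK).
Qed.

Lemma aug_absorb_U b :
  inr b \in aug_U -> inr b \notin aug_Z -> inr b \notin K ->
  exists2 v, v \in K & A (inr b) v.
Proof.
move=> bU bZ bK.
case: SU_spec => [[U0 _] | [sU [[sUU sinksU] SUE]]]; first by rewrite U0 inE in bU.
have sUZ : sU \in aug_Z by rewrite !inE SUE inE eqxx !orbT.
have AbsU : A (inr b) sU by apply: sinksU => //; apply: contraNneq bZ => ->.
apply: (kernel_absorb_through orA acyclicA kerK bK sUZ AbsU) => v vK AsUv.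
have [c Ec] : exists c, sU = inr c by move/imsetP: sUU => [c _ ->]; exists c.
subst sU; move/aug_U_inr: sUU => /andP[cX ncsX]; move/aug_U_inr: bU => /andP[bX _].
have vZ : v \in aug_Z by exact: (subsetP kerK.1).
have vsX : v != inr sX.
  apply: contraNneq ncsX => <-.
  by rewrite (orientation_sym orA) (orientation_adj orA AsUv).
have bv : inr b != v by apply: contraNneq bK => ->.
exact: (aug_adj_Y bX cX vZ vsX bv (orientation_adj orA AsUv)).
Qed.

Lemma aug_absorb_Y b :
  b \notin X -> inr b \notin aug_Z -> inr b \notin K ->
  exists2 v, v \in K & A (inr b) v.
Proof.
move=> bX bZ bK.
have [bU | bnU] := boolP (inr b \in aug_U); first exact: aug_absorb_U.
have gbsX : g (inr b) (inr sX).
  rewrite (orientation_sym orA); apply: contraNT bnU => nsXb.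
  by apply/imsetP; exists b; rewrite // !inE bX.
have AbsY : A (inr b) (inr sY).
  case: sinkY => _; apply; first by apply: imset_f; rewrite inE.
  by apply: contraNneq bZ => ->; exact: aug_Z_sY.
apply: (kernel_absorb_through orA acyclicA kerK bK aug_Z_sY AbsY) => v vK AsYv.
have [-> // | vsX] := eqVneq v (inr sX).
have vZ : v \in aug_Z by exact: (subsetP kerK.1).
have bv : inr b != v by apply: contraNneq bK => ->.
exact: (aug_adj_Y bX sY_notin_X vZ vsX bv (orientation_adj orA AsYv)).
Qed.

End Augmentation.

Theorem lemma3 (W VB : finType) (e : rel W) (x y : W)
  (X : {set VB}) (eB : rel VB)
  (A : rel (aug_vert W VB x y))
  (sX sY : VB) (SU : {set aug_vert W VB x y}) :
  simple_graph e ->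
  flat_edge e x y ->
  simple_graph eB ->
  is_clique eB X -> is_clique eB (~: X) ->
  (exists a b, [/\ a \in X, b \in ~: X & eB a b]) ->
  orientation (aug_adj e x y X eB) A ->
  clique_acyclic (aug_adj e x y X eB) A ->
  is_sink A [set inr u | u in X] (inr sX) ->
  is_sink A [set inr u | u in ~: X] (inr sY) ->
  ~~ A (inr sX) (inr sY) ->
  let U := [set inr u | u in ~: X &
              ~~ aug_adj e x y X eB (inr sX) (inr u)] in
  (U = set0 /\ SU = set0) \/ (exists sU, is_sink A U sU /\ SU = [set sU]) ->
  let Z := [set v | if v is inl _ then true else false]
             :|: [set inr sX; inr sY] :|: SU in
  forall K, kernel_of_induced A Z K -> kernel A K.
Proof.
move=> _ _ _ _ cliqueY _ orA acyclicA sinkX sinkY nAXY U SU_spec Z K kerK.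
have [_ [stableK absK]] := kerK.
split; [exact: subsetT | split; first exact: stableK].
move=> u _ uK.
have [uZ | uZ] := boolP (u \in Z); first exact: absK.
case: u uZ uK => [w | b] uZ uK; first by rewrite !inE in uZ.
have [bX | bX] := boolP (b \in X).
- exact: (aug_absorb_X orA acyclicA sinkX nAXY SU_spec kerK bX uZ uK).
- exact: (aug_absorb_Y cliqueY orA acyclicA sinkY SU_spec kerK bX uZ uK).
Qed.
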